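(* The prices (data) are consistent if and only if, for every maturity $t$, the following hold: (i) $\dfrac{\overline r_{t,l}-\underline r_{t,j}}{k_{t,l}-k_{t,j}}\ge\dfrac{\underline r_{t,j}-\overline r_{t,i}}{k_{t,j}-k_{t,i}}$ for all $1\le i<j<l\le N_t$; (ii) $\dfrac{\overline r_{t,l}-\underline r_{t,i}}{k_{t,l}-k_{t,i}}\ge-1$ for all $1\le i<l\le N_t$; (iii) $\underline r_{t,j}\le\overline r_{t,i}$ for all $1\le i<j\le N_t$; (iv) for all $1\le i<j\le N_t$: $\underline r_{t,j}=\overline r_{t,i}$ implies $\underline r_{t,j}=\overline r_{t,i}=0$.
   Context: Setting (data): $\mathcal T=\{0,\dots,T\}$, $T\ge1$; positive deterministic bank account $B(t)$, $B(0)=1$, $D(t)=1/B(t)$; for each maturity $t\in\{1,\dots,T\}$ strikes $0<K_{t,1}<\dots<K_{t,N_t}$, discounted strikes $k_{t,i}=D(t)K_{t,i}$, call bid/ask prices $\underline r_{t,i},\overline r_{t,i}>0$; underlying bid/ask $0<\underline S_0\le\overline S_0$. A \emph{model} is a finite probability space with filtration and adapted processes $\underline S,\overline S,S^C$ with $0<\underline S_t\le S^C_t\le\overline S_t$ (time-0 values given). The prices are \emph{consistent} if there is a model such that $\mathbb E[(D(t)S^C_t-k_{t,i})^+]\in[\underline r_{t,i},\overline r_{t,i}]$ for all $t,i$, and there is a process $S^*$ with $\underline S_t\le S^*_t\le\overline S_t$ for all $t$ such that $(D(t)S^*_t)_{t\in\mathcal T}$ is a martingale. No bound on the spread is imposed.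 *)

From HB Require Import structures.
From mathcomp Require Import all_boot all_order all_algebra.
Set Implicit Arguments.
Unset Strict Implicit.
Unset Printing Implicit Defensive.
Import Order.TTheory GRing.Theory Num.Theory.
Local Open Scope ring_scope.

Section FiniteModels.
Variables (R : realFieldType) (Omega : finType).

(* a sigma-algebra on the finite set Omega (finite unions suffice) *)
Definition sigma_algebra (F : {set {set Omega}}) : Prop :=
  [/\ [set: Omega] \in F,
      (forall A, A \in F -> ~: A \in F) &
      (forall A B, A \in F -> B \in F -> A :|: B \in F)].

Definition filtration (T : nat) (F : nat -> {set {set Omega}}) : Prop :=
  (forall t, (t <= T)%N -> sigma_algebra (F t)) /\
  (forall t, (t < T)%N -> F t \subset F t.+1).

Definition measurable (F : {set {set Omega}}) (X : Omega -> R) : Prop :=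
  forall r : R, [set w | X w == r] \in F.

Definition adapted (T : nat) (F : nat -> {set {set Omega}})
  (X : nat -> Omega -> R) : Prop :=
  forall t, (t <= T)%N -> measurable (F t) (X t).

Definition probability (p : Omega -> R) : Prop :=
  (forall w, 0 <= p w) /\ \sum_w p w = 1.

Definition expect (p : Omega -> R) (X : Omega -> R) : R := \sum_w p w * X w.

Definition martingale (T : nat) (p : Omega -> R)
  (F : nat -> {set {set Omega}}) (M : nat -> Omega -> R) : Prop :=
  adapted T F M /\
  (forall t, (t < T)%N -> forall A, A \in F t ->
     \sum_(w in A) p w * M t.+1 w = \sum_(w in A) p w * M t w).

End FiniteModels.

(* discount factor D(t) = 1/B(t) and discounted strikes k_{t,i} = D(t) K_{t,i} *)
Definition disc (R : realFieldType) (B : nat -> R) (t : nat) : R := (B t)^-1.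
Definition dstrike (R : realFieldType) (B : nat -> R) (K : nat -> nat -> R)
  (t i : nat) : R := disc B t * K t i.

Definition consistent (R : realFieldType) (T : nat) (B : nat -> R)
  (N : nat -> nat) (K rbid rask : nat -> nat -> R) (S0bid S0ask : R) : Prop :=
  exists (Omega : finType) (p : Omega -> R) (F : nat -> {set {set Omega}})
         (Sl Sh SC : nat -> Omega -> R),
    probability p /\ filtration T F /\
    adapted T F Sl /\ adapted T F Sh /\ adapted T F SC /\
    (forall t w, (t <= T)%N -> 0 < Sl t w /\ Sl t w <= SC t w <= Sh t w) /\
    (forall w, Sl 0%N w = S0bid /\ Sh 0%N w = S0ask) /\
        (forall t i, (1 <= t <= T)%N -> (1 <= i <= N t)%N ->
            rbid t i <= expect p (fun w => Num.max (disc B t * SC t w - dstrike B K t i) 0)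
                     <= rask t i) /\
        exists Sstar : nat -> Omega -> R,
          (forall t w, (t <= T)%N -> Sl t w <= Sstar t w <= Sh t w) /\
          martingale T p F (fun t w => disc B t * Sstar t w).

From HB Require Import structures.
From mathcomp Require Import all_boot all_order all_algebra.
From mathcomp Require Import ring lra zify.
Import Order.TTheory GRing.Theory Num.Theory.
Set Implicit Arguments.
Unset Strict Implicit.
Unset Printing Implicit Defensive.
Local Open Scope ring_scope.

(* Necessity: for any random variable Y the call price
   x |-> E[(Y - x)^+] is nonincreasing, 1-Lipschitz, convex, and strictly
   decreasing where it is positive; squeezing these properties between the bid
   and ask quotes at the strikes gives (i)-(iv).
   Sufficiency: by (i), (ii), and (iii)-(iv), which for positive bids mean
   b_j < a_i, through each (k_j, b_j) passes a line of slope in [-1, 0) lying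
   below all asks.  The upper envelope of these lines, sampled at the strikes, is a decreasing convex
   curve with slopes in [-1, 0) squeezed between the quotes, and it is the call
   price curve of the discrete law with atoms at the strikes weighted by the jumps
   of the slope, plus one atom where the last linear piece vanishes.  The product
   of these laws over the maturities, with the full-information filtration, gives
   the model; since the spread is unbounded, the deterministic martingale
   B(t) S0bid fits between the bid and ask of the underlying. *)

Section BigmaxNat.
Context {disp : Order.disp_t} {T : orderType disp}.
Local Open Scope order_scope.

Lemma le_bigmax_nat (x0 : T) (F : nat -> T) m n i : (m <= i < n)%N ->
  F i <= \big[Order.max/x0]_(m <= j < n) F j.
Proof. by move=> mi; apply: le_bigmax_seq => //; rewrite mem_index_iota. Qed.

Lemma ge_bigmin_nat (x0 : T) (F : nat -> T) m n i : (m <= i < n)%N ->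
  \big[Order.min/x0]_(m <= j < n) F j <= F i.
Proof. by move=> mi; apply: ge_bigmin_seq => //; rewrite mem_index_iota. Qed.

Lemma bigmax_nat_attained (F : nat -> T) m n : (m < n)%N ->
  exists2 i, (m <= i < n)%N & \big[Order.max/F m]_(m <= j < n) F j = F i.
Proof.
move=> mn; rewrite big_nat_cond.
apply: (big_ind (fun v => exists2 i, (m <= i < n)%N & v = F i)).
- by exists m; rewrite ?leqnn.
- by move=> u v [i ? ->] [j ? ->]; rewrite maxEle; case: ifP; [exists j | exists i].
- by move=> i /andP[? _]; exists i.
Qed.

End BigmaxNat.

Section CallPayoff.
Variable R : realFieldType.
Implicit Types x y : R.

Definition call_payoff y x : R := Num.max (y - x) 0.

Lemma call_payoffE y x : call_payoff y x = if y <= x then 0 else y - x.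
Proof.
rewrite /call_payoff; case: leP => yx; first by rewrite max_r // subr_le0.
by rewrite max_l // subr_ge0 ltW.
Qed.

Lemma call_payoff_nonincr y x1 x2 : x1 <= x2 -> call_payoff y x2 <= call_payoff y x1.
Proof. by move=> ?; rewrite !call_payoffE; case: (leP y x1); case: (leP y x2); lra. Qed.

Lemma call_payoff_lipschitz y x1 x2 : x1 <= x2 ->
  call_payoff y x1 - call_payoff y x2 <= x2 - x1.
Proof. by move=> ?; rewrite !call_payoffE; case: (leP y x1); case: (leP y x2); lra. Qed.

Lemma call_payoff_convex y x1 x2 x3 : x1 < x2 -> x2 < x3 ->
  (x3 - x2) * (call_payoff y x2 - call_payoff y x1) <=
  (x2 - x1) * (call_payoff y x3 - call_payoff y x2).
Proof.
move=> ? ?; rewrite !call_payoffE.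
by case: (leP y x1); case: (leP y x2); case: (leP y x3); nra.
Qed.

Lemma call_payoff_eq0 y x1 x2 : x1 < x2 ->
  call_payoff y x1 = call_payoff y x2 -> call_payoff y x1 = 0.
Proof. by move=> ?; rewrite !call_payoffE; case: (leP y x1); case: (leP y x2) => //; lra. Qed.

Lemma call_payoffB_out y x1 x2 : x1 <= x2 -> y <= x1 ->
  call_payoff y x1 - call_payoff y x2 = 0.
Proof. by move=> ? ?; rewrite !call_payoffE; case: (leP y x1); case: (leP y x2); lra. Qed.

Lemma call_payoffB_in y x1 x2 : x1 <= x2 -> x2 <= y ->
  call_payoff y x1 - call_payoff y x2 = x2 - x1.
Proof. by move=> ? ?; rewrite !call_payoffE; case: (leP y x1); case: (leP y x2); lra. Qed.

End CallPayoff.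

Section Expectation.
Variables (R : realFieldType) (Omega : finType) (p : Omega -> R).
Hypothesis p_ge0 : forall w, 0 <= p w.
Hypothesis p_sum1 : \sum_w p w = 1.
Implicit Types f g : Omega -> R.

Lemma expectB f g : expect p (fun w => f w - g w) = expect p f - expect p g.
Proof. by rewrite /expect -sumrB; apply: eq_bigr => w _; ring. Qed.

Lemma expectZ c f : expect p (fun w => c * f w) = c * expect p f.
Proof. by rewrite /expect mulr_sumr; apply: eq_bigr => w _; ring. Qed.

Lemma expect_cst c : expect p (fun=> c) = c.
Proof. by rewrite /expect -mulr_suml p_sum1 mul1r. Qed.

Lemma ler_expect f g : (forall w, f w <= g w) -> expect p f <= expect p g.
Proof. by move=> fg; apply: ler_sum => w _; apply: ler_wpM2l. Qed.

Definition call_price (Y : Omega -> R) x := expect p (fun w => call_payoff (Y w) x).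

Variable Y : Omega -> R.

Lemma call_price_nonincr x1 x2 : x1 <= x2 -> call_price Y x2 <= call_price Y x1.
Proof. by move=> x12; apply: ler_expect => w; apply: call_payoff_nonincr. Qed.

Lemma call_price_lipschitz x1 x2 : x1 <= x2 ->
  call_price Y x1 - call_price Y x2 <= x2 - x1.
Proof.
move=> x12; rewrite -expectB -[leRHS]expect_cst.
by apply: ler_expect => w; apply: call_payoff_lipschitz.
Qed.

Lemma call_price_convex x1 x2 x3 : x1 < x2 -> x2 < x3 ->
  (x3 - x2) * (call_price Y x2 - call_price Y x1) <=
  (x2 - x1) * (call_price Y x3 - call_price Y x2).
Proof.
move=> x12 x23; rewrite -!expectB -!expectZ.
by apply: ler_expect => w; apply: call_payoff_convex.
Qed.

Lemma call_price_eq0 x1 x2 : x1 < x2 ->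
  call_price Y x1 = call_price Y x2 -> call_price Y x1 = 0.
Proof.
move=> x12 /eqP; rewrite -subr_eq0 -expectB => /eqP gap0.
have term0 w : p w * (call_payoff (Y w) x1 - call_payoff (Y w) x2) = 0.
  apply: (psumr_eq0P _ gap0) => // v _; apply: mulr_ge0 => //.
  by rewrite subr_ge0 call_payoff_nonincr // ltW.
rewrite /call_price /expect big1 // => w _; have /eqP := term0 w.
rewrite mulf_eq0 subr_eq0 => /orP[/eqP -> | /eqP eq12]; first by rewrite mul0r.
by rewrite (call_payoff_eq0 x12 eq12) mulr0.
Qed.

End Expectation.

(* Conditions (i)-(iv) for one maturity: [k] the discounted strikes, [a] the asks,
   [b] the bids. *)
Definition quote_conditions (R : realFieldType) (n : nat) (k a b : nat -> R) : Prop :=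
  [/\ (forall i j l, (1 <= i)%N -> (i < j)%N -> (j < l)%N -> (l <= n)%N ->
         (a l - b j) / (k l - k j) >= (b j - a i) / (k j - k i)),
      (forall i l, (1 <= i)%N -> (i < l)%N -> (l <= n)%N ->
         (a l - b i) / (k l - k i) >= -1),
      (forall i j, (1 <= i)%N -> (i < j)%N -> (j <= n)%N -> b j <= a i) &
      (forall i j, (1 <= i)%N -> (i < j)%N -> (j <= n)%N ->
         b j = a i -> b j = 0 /\ a i = 0)].

Section QuotesOfPriceFunction.
Variables (R : realFieldType) (C : R -> R) (n : nat) (k a b : nat -> R).
Hypothesis C_nonincr : forall x1 x2, x1 <= x2 -> C x2 <= C x1.
Hypothesis C_lipschitz : forall x1 x2, x1 <= x2 -> C x1 - C x2 <= x2 - x1.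
Hypothesis C_convex : forall x1 x2 x3, x1 < x2 -> x2 < x3 ->
  (x3 - x2) * (C x2 - C x1) <= (x2 - x1) * (C x3 - C x2).
Hypothesis C_eq0 : forall x1 x2, x1 < x2 -> C x1 = C x2 -> C x1 = 0.
Hypothesis k_lt : forall i j, (1 <= i)%N -> (i < j)%N -> (j <= n)%N -> k i < k j.
Hypothesis bid_gt0 : forall i, (1 <= i <= n)%N -> 0 < b i.
Hypothesis C_quoted : forall i, (1 <= i <= n)%N -> b i <= C (k i) <= a i.

Lemma quote_conditions_of_prices : quote_conditions n k a b.
Proof.
have quoted i : (1 <= i <= n)%N -> b i <= C (k i) /\ C (k i) <= a i.
  by move=> /C_quoted /andP.
split.
- move=> i j l i1 ij jl ln.
  have kij := k_lt i1 ij (ltnW (leq_trans jl ln)).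
  have kjl : k j < k l by apply: k_lt => //; lia.
  have := C_convex kij kjl.
  have [bi ai] := quoted i ltac:(lia); have [bj aj] := quoted j ltac:(lia).
  have [bl al] := quoted l ltac:(lia).
  rewrite ler_pdivrMr ?subr_gt0 // mulrAC ler_pdivlMr ?subr_gt0 //; nra.
- move=> i l i1 il ln; have kil := k_lt i1 il ln.
  have := C_lipschitz (ltW kil).
  have [bi ai] := quoted i ltac:(lia); have [bl al] := quoted l ltac:(lia).
  rewrite ler_pdivlMr ?subr_gt0 //; lra.
- move=> i j i1 ij jn; have := C_nonincr (ltW (k_lt i1 ij jn)).
  have [bi ai] := quoted i ltac:(lia); have [bj aj] := quoted j ltac:(lia); lra.
- move=> i j i1 ij jn eq_ba; have kij := k_lt i1 ij jn.
  have [bi ai] := quoted i ltac:(lia); have [bj aj] := quoted j ltac:(lia).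
  have Cji := C_nonincr (ltW kij); have bj_gt0 := bid_gt0 (i := j) ltac:(lia).
  have Cij : C (k i) = C (k j) by lra.
  have := C_eq0 kij Cij; lra.
Qed.

End QuotesOfPriceFunction.

Section PriceCurve.
Variables (R : realFieldType) (n : nat) (k a b : nat -> R).
Hypothesis k_lt : forall i j, (1 <= i)%N -> (i < j)%N -> (j <= n)%N -> k i < k j.
Hypothesis bid_gt0 : forall i, (1 <= i <= n)%N -> 0 < b i.
Hypothesis bid_le_ask : forall i, (1 <= i <= n)%N -> b i <= a i.
Hypothesis quotes : quote_conditions n k a b.

Lemma bid_lt_ask i j : (1 <= i)%N -> (i < j)%N -> (j <= n)%N -> b j < a i.
Proof.
move=> i1 ij jn; have [_ _ le_ba eq_ba] := quotes.
rewrite lt_neqAle le_ba // andbT; apply/eqP => /(eq_ba _ _ i1 ij jn) [bj0 _].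
have /bid_gt0 : (1 <= j <= n)%N by lia.
by rewrite bj0 ltxx.
Qed.

Definition bid_slope j := \big[Num.max/-1]_(1 <= i < j) ((b j - a i) / (k j - k i)).

Definition ask_intercept s := \big[Num.min/a 1 - s * k 1]_(1 <= i < n.+1) (a i - s * k i).

Definition support_line s x := s * x + ask_intercept s.

Definition price_curve j :=
  \big[Num.max/support_line (bid_slope 1) (k j)]_(1 <= i < n.+1)
    support_line (bid_slope i) (k j).

Lemma bid_slope_ge j : -1 <= bid_slope j.
Proof. exact: bigmax_ge_id. Qed.

Lemma bid_slope_lt0 j : (j <= n)%N -> bid_slope j < 0.
Proof.
move=> jn; rewrite /bid_slope big_nat_cond; apply: bigmax_lt; first by rewrite ltrN10.
move=> i /andP[/andP[i1 ij] _]; have kij := k_lt i1 ij jn.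
by rewrite ltr_pdivrMr ?subr_gt0 // mul0r subr_lt0 bid_lt_ask.
Qed.

Lemma bid_slope_ge_secant i j : (1 <= i < j)%N ->
  (b j - a i) / (k j - k i) <= bid_slope j.
Proof. exact: le_bigmax_nat. Qed.

Lemma bid_slope_le_secant j l : (1 <= j)%N -> (j < l)%N -> (l <= n)%N ->
  bid_slope j <= (a l - b j) / (k l - k j).
Proof.
move=> j1 jl ln; have [convex ge_m1 _ _] := quotes.
rewrite /bid_slope big_nat_cond; apply: bigmax_le; first exact: ge_m1.
by move=> i /andP[/andP[i1 ij] _]; apply: convex.
Qed.

Lemma ask_intercept_le s i : (1 <= i <= n)%N -> ask_intercept s <= a i - s * k i.
Proof. by move=> i_n; apply: ge_bigmin_nat; rewrite ltnS. Qed.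

Lemma le_ask_intercept s v : (1 <= n)%N ->
  (forall i, (1 <= i <= n)%N -> v <= a i - s * k i) -> v <= ask_intercept s.
Proof.
move=> n1 v_le; rewrite /ask_intercept big_nat_cond.
apply: le_bigmin; first by apply: v_le; rewrite leqnn n1.
by move=> i /andP[i_n _]; apply: v_le; rewrite -ltnS.
Qed.

Lemma support_line_le_ask s i : (1 <= i <= n)%N -> support_line s (k i) <= a i.
Proof. by move=> /(ask_intercept_le s); rewrite /support_line; lra. Qed.

Lemma le_price_curve j i : (1 <= i <= n)%N ->
  support_line (bid_slope i) (k j) <= price_curve j.
Proof. by move=> i_n; apply: le_bigmax_nat; rewrite ltnS. Qed.

Lemma price_curve_attained j : (1 <= n)%N ->
  exists2 i, (1 <= i <= n)%N & price_curve j = support_line (bid_slope i) (k j).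
Proof.
move=> n1; have [i i_n max_i] := bigmax_nat_attained
  (fun i => support_line (bid_slope i) (k j)) (n1 : (1 < n.+1)%N).
by exists i; [rewrite -ltnS | exact: max_i].
Qed.

Lemma price_curve_le_ask j : (1 <= j <= n)%N -> price_curve j <= a j.
Proof.
move=> j_n; rewrite /price_curve big_nat_cond.
apply: bigmax_le; first exact: support_line_le_ask.
by move=> i _; apply: support_line_le_ask.
Qed.

(* The line of slope [bid_slope j] through (k_j, b_j) stays below every ask:
   to the left of k_j by the choice of the slope, to the right by (i) and (ii). *)
Lemma bid_le_price_curve j : (1 <= j <= n)%N -> b j <= price_curve j.
Proof.
move=> j_n; apply: le_trans (le_price_curve j j_n).
suff : b j - bid_slope j * k j <= ask_intercept (bid_slope j) by rewrite /support_line; lra.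
apply: le_ask_intercept => [|i i_n]; first by lia.
case: (ltngtP i j) => [ij | ji | <-].
- have kij : k i < k j by apply: k_lt; lia.
  have := @bid_slope_ge_secant i j ltac:(lia).
  rewrite ler_pdivrMr ?subr_gt0 //; nra.
- have kji : k j < k i by apply: k_lt; lia.
  have := @bid_slope_le_secant j i ltac:(lia) ji ltac:(lia).
  rewrite ler_pdivlMr ?subr_gt0 //; nra.
- by have := bid_le_ask i_n; lra.
Qed.

Lemma price_curve_decr j : (1 <= j)%N -> (j < n)%N -> price_curve j.+1 < price_curve j.
Proof.
move=> j1 jn; have kj : k j < k j.+1 by apply: k_lt.
have line_lt i : (1 <= i <= n)%N ->
    support_line (bid_slope i) (k j.+1) < price_curve j.
  move=> i_n; apply: lt_le_trans (le_price_curve j i_n).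
  have := @bid_slope_lt0 i ltac:(lia); rewrite /support_line; nra.
rewrite {1}/price_curve big_nat_cond; apply: bigmax_lt; first by apply: line_lt; lia.
by move=> i /andP[i_n _]; apply: line_lt; rewrite -ltnS.
Qed.

Lemma price_curve_lipschitz j : (1 <= j)%N -> (j < n)%N ->
  k j - k j.+1 <= price_curve j.+1 - price_curve j.
Proof.
move=> j1 jn; have kj : k j < k j.+1 by apply: k_lt.
suff : price_curve j <= price_curve j.+1 + (k j.+1 - k j) by lra.
have line_le i : (1 <= i <= n)%N ->
    support_line (bid_slope i) (k j) <= price_curve j.+1 + (k j.+1 - k j).
  move=> i_n; have := le_price_curve j.+1 i_n; have := bid_slope_ge i.
  rewrite /support_line; nra.
rewrite {1}/price_curve big_nat_cond; apply: bigmax_le; first by apply: line_le; lia.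
by move=> i /andP[i_n _]; apply: line_le; rewrite -ltnS.
Qed.

Lemma price_curve_convex j : (1 <= j)%N -> (j.+2 <= n)%N ->
  (price_curve j.+1 - price_curve j) / (k j.+1 - k j) <=
  (price_curve j.+2 - price_curve j.+1) / (k j.+2 - k j.+1).
Proof.
move=> j1 jn; have k01 : k j < k j.+1 by apply: k_lt; lia.
have k12 : k j.+1 < k j.+2 by apply: k_lt; lia.
have [i i_n tangent] := price_curve_attained j.+1 ltac:(lia).
have := le_price_curve j i_n; have := le_price_curve j.+2 i_n.
rewrite tangent /support_line => le2 le0.
apply: (@le_trans _ _ (bid_slope i)).
  by rewrite ler_pdivrMr ?subr_gt0 //; nra.
by rewrite ler_pdivlMr ?subr_gt0 //; nra.
Qed.

End PriceCurve.

Lemma sum_ord_widen_zero (V : zmodType) (F : nat -> V) n M : (n < M)%N ->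
  (forall m, (n < m)%N -> F m = 0) -> \sum_(m < M) F m = \sum_(m < n.+1) F m.
Proof.
move=> nM F0; rewrite (big_ord_widen M F nM) [RHS]big_mkcond /=.
by apply: eq_bigr => m _; case: ifP => // /negbT; rewrite -leqNgt => /F0.
Qed.

Section AtomicDistribution.
Variables (R : realFieldType) (n : nat) (k c : nat -> R).
Hypothesis k_gt0 : forall i, (1 <= i <= n)%N -> 0 < k i.
Hypothesis k_lt : forall i j, (1 <= i)%N -> (i < j)%N -> (j <= n)%N -> k i < k j.
Hypothesis c_decr : forall j, (1 <= j)%N -> (j < n)%N -> c j.+1 < c j.
Hypothesis c_lipschitz : forall j, (1 <= j)%N -> (j < n)%N -> k j - k j.+1 <= c j.+1 - c j.
Hypothesis c_convex : forall j, (1 <= j)%N -> (j.+2 <= n)%N ->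
  (c j.+1 - c j) / (k j.+1 - k j) <= (c j.+2 - c j.+1) / (k j.+2 - k j.+1).
Hypothesis c_last_gt0 : (1 <= n)%N -> 0 < c n.

(* The slope of c on [k_j, k_(j+1)]; outside 1 <= j < n it is the slope -1 of
   the payoff to the left of all atoms. *)
Definition curve_slope j :=
  if (0 < j < n)%N then (c j.+1 - c j) / (k j.+1 - k j) else -1.

(* Atom m < n sits at k_m (atom 0, of weight 0 unless n = 0, is moved to k_1) with
   weight the jump of the slope there; the last atom is where the last linear piece
   of c vanishes. *)
Definition atom_weight m :=
  if (m < n)%N then curve_slope m - curve_slope m.-1 else (m == n)%:R * - curve_slope n.-1.

Definition atom m :=
  if (m < n)%N then k (maxn m 1) else if n == 0%N then 1 else k n - c n / curve_slope n.-1.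

Definition atom_call_price x := \sum_(m < n.+1) atom_weight m * call_payoff (atom m) x.

Let k_le i j : (1 <= i)%N -> (i <= j)%N -> (j <= n)%N -> k i <= k j.
Proof.
move=> i1 ij jn; case: (ltngtP i j) ij => // [ij _ | <- _]; last exact: lexx.
exact/ltW/k_lt.
Qed.

Lemma curve_slope_bounds j : -1 <= curve_slope j < 0.
Proof.
rewrite /curve_slope; case: ifP => [/andP[j1 jn] | _]; last by rewrite lexx ltrN10.
have kj : k j < k j.+1 by apply: k_lt.
rewrite ler_pdivlMr ?ltr_pdivrMr ?subr_gt0 // mul0r subr_lt0 c_decr // andbT.
by have := c_lipschitz j1 jn; lra.
Qed.

Lemma curve_slope_mono j : (0 < j < n)%N -> curve_slope j.-1 <= curve_slope j.
Proof.
case: j => [|[|j]] // /andP[_ jn].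
  by rewrite {1}/curve_slope /=; case/andP: (curve_slope_bounds 1).
by rewrite /curve_slope /= jn ltnW //; apply: c_convex.
Qed.

Lemma atom_weight_ge0 m : 0 <= atom_weight m.
Proof.
rewrite /atom_weight; case: ifP => [mn | _].
  case: m mn => [|m] mn; first by rewrite subrr.
  by rewrite subr_ge0 curve_slope_mono.
by case/andP: (curve_slope_bounds n.-1) => _ ?; case: (m == n); rewrite /=; nra.
Qed.

Lemma atom_weight_out m : (n < m)%N -> atom_weight m = 0.
Proof. by move=> nm; rewrite /atom_weight ltnNge ltnW //= gtn_eqF // mul0r. Qed.

Lemma sum_atom_weight_prefix p : (p < n)%N ->
  \sum_(m < p.+1) atom_weight m = curve_slope p + 1.
Proof.
move=> pn; rewrite big_ord_recl /atom_weight (leq_ltn_trans _ pn) // subrr add0r.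
rewrite (eq_bigr (fun i : 'I_p => curve_slope i.+1 - curve_slope i)); last first.
  by move=> i _; rewrite /bump /= ifT // (leq_ltn_trans _ pn).
by rewrite -(big_mkord xpredT (fun i => curve_slope i.+1 - curve_slope i))
  telescope_sumr // /curve_slope /=; lra.
Qed.

Lemma sum_atom_weight M : (n < M)%N -> \sum_(m < M) atom_weight m = 1.
Proof.
move=> nM; rewrite (sum_ord_widen_zero nM atom_weight_out) big_ord_recr /=.
rewrite [atom_weight n]/atom_weight ltnn eqxx mul1r.
case: (posnP n) => [n0 | n_gt0].
  by rewrite n0 big_ord0 /curve_slope /=; lra.
have := @sum_atom_weight_prefix n.-1; rewrite ltn_predL prednK // => /(_ n_gt0) ->; lra.
Qed.

Lemma k_lt_last_atom : (1 <= n)%N -> k n < atom n.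
Proof.
move=> n1; rewrite /atom ltnn; case: eqP => [n0 | _]; first by rewrite n0 in n1.
case/andP: (curve_slope_bounds n.-1) => _ s_lt0.
have : 0 < c n / - curve_slope n.-1 by rewrite divr_gt0 ?c_last_gt0 // oppr_gt0.
by rewrite invrN mulrN; lra.
Qed.

Lemma atom_gt0 m : 0 < atom m.
Proof.
case: (posnP n) => [n0 | n1].
  by rewrite /atom n0 /= ltr01.
case: (ltnP m n) => [mn | nm].
  by rewrite /atom mn k_gt0 // leq_maxr geq_max n1 andbT ltnW.
have -> : atom m = atom n by rewrite /atom ltnn ltnNge nm.
by have := k_lt_last_atom n1; have := @k_gt0 n ltac:(lia); lra.
Qed.

Lemma atom_le_k m i : (m < n)%N -> (1 <= i <= n)%N -> (m <= i)%N -> atom m <= k i.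
Proof.
move=> mn /andP[i1 i_n] mi; rewrite /atom mn.
by apply: k_le; rewrite ?leq_maxr // geq_max i1 mi.
Qed.

Lemma k_le_atom m i : (1 <= i)%N -> (i <= m)%N -> (m <= n)%N -> k i <= atom m.
Proof.
move=> i1 im mn; case: (ltngtP m n) im mn => // [m_lt_n | ->] im _.
  by rewrite /atom m_lt_n (maxn_idPl (leq_trans i1 im)) k_le // ltnW.
exact/ltW/(le_lt_trans (k_le i1 im (leqnn n)) (k_lt_last_atom (leq_trans i1 im))).
Qed.

Lemma sum_atom_weight_above i : (i < n)%N ->
  \sum_(m < n.+1) atom_weight m * (i < m)%N%:R = - curve_slope i.
Proof.
move=> i_n.
have split_weight (m : 'I_n.+1) :
    atom_weight m * (i < m)%N%:R = atom_weight m - atom_weight m * (m < i.+1)%N%:R.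
  by rewrite [(m < i.+1)%N]ltnS; case: leqP; rewrite ?mulr0 ?mulr1 ?subr0 ?subrr.
rewrite (eq_bigr _ (fun m _ => split_weight m)) sumrB.
rewrite (sum_ord_widen_zero (ltnSn n) atom_weight_out) sum_atom_weight //.
suff -> : \sum_(m < n.+1) atom_weight m * (m < i.+1)%N%:R = \sum_(m < i.+1) atom_weight m.
  by rewrite sum_atom_weight_prefix //; lra.
rewrite (big_ord_widen n.+1 atom_weight (leqW i_n)) [RHS]big_mkcond /=.
by apply: eq_bigr => m _; case: ifP; rewrite ?mulr1 ?mulr0.
Qed.

Lemma atom_call_price_last : (1 <= n)%N -> atom_call_price (k n) = c n.
Proof.
move=> n1; rewrite /atom_call_price big_ord_recr /= big1 ?add0r; last first.
  move=> m _; have atom_le : atom m <= k n by apply: atom_le_k; rewrite ?n1 ?leqnn // ltnW.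
  by rewrite call_payoffE atom_le mulr0.
rewrite call_payoffE leNgt k_lt_last_atom //= /atom_weight /atom ltnn eqxx mul1r.
have n0 : (n == 0%N) = false by case: n n1.
case/andP: (curve_slope_bounds n.-1) => _ /ltr0_neq0 s_neq0.
by rewrite n0; field.
Qed.

Lemma atom_call_price_step i : (1 <= i)%N -> (i < n)%N ->
  atom_call_price (k i) - atom_call_price (k i.+1) = c i - c i.+1.
Proof.
move=> i1 i_n; have ki : k i < k i.+1 by apply: k_lt.
have gap (m : 'I_n.+1) :
    atom_weight m * call_payoff (atom m) (k i) - atom_weight m * call_payoff (atom m) (k i.+1)
    = atom_weight m * (i < m)%N%:R * (k i.+1 - k i).
  rewrite -mulrBr -mulrA; congr (_ * _); case: (leqP m i) => mi.
    have atom_le : atom m <= k i by apply: atom_le_k => //; lia.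
    by rewrite call_payoffB_out ?mul0r // ltW.
  have le_atom : k i.+1 <= atom m by apply: k_le_atom => //; rewrite -ltnS.
  by rewrite (call_payoffB_in (ltW ki) le_atom) mulr1n mul1r.
rewrite /atom_call_price -sumrB (eq_bigr _ (fun m _ => gap m)) -mulr_suml.
rewrite sum_atom_weight_above // /curve_slope i1 i_n /=.
by have := ki; rewrite -subr_gt0 => /lt0r_neq0 dk_neq0; field.
Qed.

Lemma atom_call_price_curve i : (1 <= i <= n)%N -> atom_call_price (k i) = c i.
Proof.
move=> /andP[i1 i_n]; move: {2}(n - i)%N (erefl (n - i)%N) => d.
elim: d i i1 i_n => [|d IH] i i1 i_n gap.
  have i_eq_n : i = n by lia.
  by rewrite i_eq_n atom_call_price_last // -i_eq_n.
have := atom_call_price_step i1 ltac:(lia).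
by rewrite (IH i.+1); [lra | lia..].
Qed.

Lemma sum_atom_call_price M x : (n < M)%N ->
  \sum_(m < M) atom_weight m * call_payoff (atom m) x = atom_call_price x.
Proof.
move=> nM; pose F m := atom_weight m * call_payoff (atom m) x.
rewrite (sum_ord_widen_zero (F := F) nM) // => m /atom_weight_out w0.
by rewrite /F w0 mul0r.
Qed.

End AtomicDistribution.

Definition calibrated (R : realFieldType) (M n : nat) (k a b q x : nat -> R) : Prop :=
  [/\ forall m, 0 <= q m, \sum_(m < M) q m = 1, forall m, 0 < x m &
      forall i, (1 <= i <= n)%N -> b i <= \sum_(m < M) q m * call_payoff (x m) (k i) <= a i].

Lemma calibrated_price_curve (R : realFieldType) (M n : nat) (k a b : nat -> R) :
  (n < M)%N ->
  (forall i, (1 <= i <= n)%N -> 0 < k i) ->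
  (forall i j, (1 <= i)%N -> (i < j)%N -> (j <= n)%N -> k i < k j) ->
  (forall i, (1 <= i <= n)%N -> 0 < b i /\ b i <= a i) ->
  quote_conditions n k a b ->
  calibrated M n k a b (atom_weight n k (price_curve n k a b))
                       (atom n k (price_curve n k a b)).
Proof.
move=> nM k_gt0 k_lt quoted quotes.
have bid_gt0 i : (1 <= i <= n)%N -> 0 < b i by move/quoted => [].
have bid_le_ask i : (1 <= i <= n)%N -> b i <= a i by move/quoted => [].
have c_decr := price_curve_decr k_lt bid_gt0 quotes.
have c_lipschitz := @price_curve_lipschitz R n k a b k_lt.
have c_convex := @price_curve_convex R n k a b k_lt.
have c_bid := bid_le_price_curve k_lt bid_le_ask quotes.
have c_ask := @price_curve_le_ask R n k a b.
have c_last_gt0 : (1 <= n)%N -> 0 < price_curve n k a b n.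
  move=> n1; have n_n : (1 <= n <= n)%N by rewrite n1 leqnn.
  exact: lt_le_trans (bid_gt0 _ n_n) (c_bid _ n_n).
split=> [m | | m | i i_n].
- exact: atom_weight_ge0.
- exact: sum_atom_weight.
- exact: atom_gt0.
- rewrite sum_atom_call_price //.
  rewrite (atom_call_price_curve k_lt c_decr c_lipschitz c_last_gt0 i_n).
  by rewrite c_bid ?c_ask.
Qed.

Section ProductMeasure.
Variables (R : comNzRingType) (I J : finType) (Q : I -> J -> R).
Hypothesis Q_sum1 : forall s, \sum_j Q s j = 1.

Lemma sum_ffun_prod : \sum_(f : {ffun I -> J}) \prod_s Q s (f s) = 1.
Proof. by rewrite -bigA_distr_bigA big1. Qed.

Lemma sum_ffun_prod_coord (G : J -> R) (s0 : I) :
  \sum_(f : {ffun I -> J}) (\prod_s Q s (f s)) * G (f s0) = \sum_j Q s0 j * G j.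
Proof.
pose Q' s j := Q s j * (if s == s0 then G j else 1).
transitivity (\prod_s \sum_j Q' s j).
  rewrite bigA_distr_bigA; apply: eq_bigr => f _; rewrite /Q' big_split /=.
  by congr (_ * _); rewrite (bigD1 s0) //= eqxx big1 ?mulr1 // => s /negbTE ->.
rewrite (bigD1 s0) //= [X in _ * X]big1 ?mulr1; first by apply: eq_bigr => j _; rewrite /Q' eqxx.
by move=> s /negbTE s_neq; rewrite -(Q_sum1 s); apply: eq_bigr => j _; rewrite /Q' s_neq mulr1.
Qed.

End ProductMeasure.

Section FullInformation.
Variables (R : realFieldType) (Omega : finType) (T : nat).

Lemma filtration_setT : filtration T (fun=> [set: {set Omega}]).
Proof. by split=> t _; [split=> *; rewrite inE | exact: subxx]. Qed.

Lemma adapted_setT (X : nat -> Omega -> R) : adapted T (fun=> [set: {set Omega}]) X.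
Proof. by move=> t _ r; rewrite inE. Qed.

Lemma martingale_setT_const (p : Omega -> R) (X : nat -> Omega -> R) :
  (forall t, (t < T)%N -> X t.+1 =1 X t) -> martingale T p (fun=> [set: {set Omega}]) X.
Proof.
move=> X_const; split=> [|t tT A _]; first exact: adapted_setT.
by apply: eq_bigr => w _; rewrite X_const.
Qed.

End FullInformation.

Lemma product_model (R : realFieldType) (T M : nat) (q x : nat -> nat -> R) :
  (0 < M)%N ->
  (forall t, (1 <= t <= T)%N -> (forall m, 0 <= q t m) /\ \sum_(m < M) q t m = 1) ->
  exists (Omega : finType) (p : Omega -> R) (Y : nat -> Omega -> R),
    [/\ probability p,
        forall t w, (1 <= t <= T)%N -> exists m, Y t w = x t m &
        forall t (G : R -> R), (1 <= t <= T)%N ->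
          expect p (fun w => G (Y t w)) = \sum_(m < M) q t m * G (x t m)].
Proof.
move=> M_gt0 marginal.
have marginal_s (s : 'I_T.+1) : s != 0%N :> nat ->
    (forall m, 0 <= q s m) /\ \sum_(m < M) q s m = 1.
  by move=> s0; apply: marginal; rewrite lt0n s0 -ltnS ltn_ord.
(* coordinate 0 is unused; a Dirac weight keeps the product a probability *)
pose w (s : 'I_T.+1) (m : 'I_M) := if s == 0%N :> nat then (m == 0%N :> nat)%:R else q s m.
have w_ge0 s m : 0 <= w s m.
  by rewrite /w; case: eqP => [_ | /eqP/marginal_s[q_ge0 _]] //; case: (_ == _).
have w_sum1 s : \sum_m w s m = 1.
  rewrite /w; case: eqP => [_ | /eqP/marginal_s[_ q_sum1]] //.
  rewrite (bigD1 (Ordinal M_gt0)) //= big1 ?addr0 // => m.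
  by rewrite -val_eqE => /negbTE ->.
exists {ffun 'I_T.+1 -> 'I_M}, (fun f : {ffun 'I_T.+1 -> 'I_M} => \prod_s w s (f s)),
  (fun t (f : {ffun 'I_T.+1 -> 'I_M}) => x t (f (inord t))).
split=> [| t f _ | t G /andP[t1 tT]].
- by split=> [f | ]; [apply: prodr_ge0 | exact: sum_ffun_prod].
- by exists (f (inord t)).
- have coord := sum_ffun_prod_coord w_sum1 (fun m => G (x t m)) (inord t).
  by rewrite /= /w inordK ?ltnS // gtn_eqF // in coord.
Qed.

Lemma consistent_of_discounted_prices (R : realFieldType) (T : nat) (B : nat -> R)
  (N : nat -> nat) (K rbid rask : nat -> nat -> R) (S0bid S0ask : R)
  (Omega : finType) (p : Omega -> R) (Y : nat -> Omega -> R) :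
  (forall t, (t <= T)%N -> 0 < B t) -> B 0%N = 1 ->
  0 < S0bid -> S0bid <= S0ask -> probability p ->
  (forall t w, (1 <= t <= T)%N -> 0 < Y t w) ->
  (forall t i, (1 <= t <= T)%N -> (1 <= i <= N t)%N ->
     rbid t i <= expect p (fun w => call_payoff (Y t w) (dstrike B K t i)) <= rask t i) ->
  consistent T B N K rbid rask S0bid S0ask.
Proof.
move=> B_gt0 B0 S0bid_gt0 S0bid_le prob_p Y_gt0 calls.
have disc_cancel t y : (t <= T)%N -> disc B t * (B t * y) = y.
  by move=> tT; rewrite mulrA mulVf ?mul1r // gt_eqF ?B_gt0.
pose SC t w := if t == 0%N then S0bid else B t * Y t w.
pose Sstar t (w : Omega) := B t * S0bid.
pose Sl t w := if t == 0%N then S0bid else Num.min (SC t w) (Sstar t w).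
pose Sh t w := if t == 0%N then S0ask else Num.max (SC t w) (Sstar t w).
exists Omega, p, (fun=> setT), Sl, Sh, SC.
split; first exact: prob_p.
split; first exact: filtration_setT.
do 3 (split; first exact: adapted_setT).
split.
  move=> t w tT; rewrite /Sl /Sh; case: eqP => [-> | /eqP t0]; first by rewrite /SC /= lexx.
  have t_T : (1 <= t <= T)%N by rewrite lt0n t0.
  have SC_gt0 : 0 < SC t w by rewrite /SC (negbTE t0) mulr_gt0 ?B_gt0 ?Y_gt0.
  have Sstar_gt0 : 0 < Sstar t w by rewrite mulr_gt0 ?B_gt0.
  by rewrite lt_min SC_gt0 Sstar_gt0 ge_min le_max !lexx.
split; first by [].
split.
  move=> t i t_T i_n; have [t1 tT] := andP t_T.
  suff -> : expect p (fun w => Num.max (disc B t * SC t w - dstrike B K t i) 0) =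
            expect p (fun w => call_payoff (Y t w) (dstrike B K t i)) by apply: calls.
  by apply: eq_bigr => w _; rewrite /SC gtn_eqF // disc_cancel.
exists Sstar; split.
  move=> t w tT; rewrite /Sl /Sh; case: eqP => [-> | _]; first by rewrite /Sstar B0 mul1r lexx.
  by rewrite ge_min le_max !lexx !orbT.
by apply: martingale_setT_const => t tT w; rewrite /Sstar !disc_cancel // ltnW.
Qed.

Lemma consistent_of_calibrated (R : realFieldType) (T : nat) (B : nat -> R)
  (N : nat -> nat) (K rbid rask : nat -> nat -> R) (S0bid S0ask : R)
  (M : nat) (q x : nat -> nat -> R) :
  (0 < M)%N -> (forall t, (t <= T)%N -> 0 < B t) -> B 0%N = 1 ->
  0 < S0bid -> S0bid <= S0ask ->
  (forall t, (1 <= t <= T)%N ->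
     calibrated M (N t) (dstrike B K t) (rask t) (rbid t) (q t) (x t)) ->
  consistent T B N K rbid rask S0bid S0ask.
Proof.
move=> M_gt0 B_gt0 B0 S0bid_gt0 S0bid_le cal.
have [|Omega [p [Y [prob_p Y_atom Y_law]]]] := @product_model R T M q x M_gt0.
  by move=> t /cal[].
apply: (consistent_of_discounted_prices (p := p) (Y := Y)) => // [t w t_T | t i t_T i_n].
  by have [m ->] := Y_atom t w t_T; have [_ _ x_gt0 _] := cal t t_T.
by rewrite (Y_law t (fun y => call_payoff y (dstrike B K t i))) //; have [_ _ _ ->] := cal t t_T.
Qed.

Theorem mainTheorem8 (R : rcfType) (T : nat) (B : nat -> R) (N : nat -> nat)
  (K rbid rask : nat -> nat -> R) (S0bid S0ask : R) :
  (1 <= T)%N ->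
  (forall t, (t <= T)%N -> 0 < B t) -> B 0%N = 1 ->
  (forall t, (1 <= t <= T)%N ->
     (forall i, (1 <= i <= N t)%N -> 0 < K t i) /\
     (forall i j, (1 <= i)%N -> (i < j)%N -> (j <= N t)%N -> K t i < K t j)) ->
  (forall t i, (1 <= t <= T)%N -> (1 <= i <= N t)%N ->
     0 < rbid t i /\ rbid t i <= rask t i) ->
  0 < S0bid -> S0bid <= S0ask ->
  consistent T B N K rbid rask S0bid S0ask <->
  (forall t, (1 <= t <= T)%N ->
    [/\ (* (i) *)
        (forall i j l, (1 <= i)%N -> (i < j)%N -> (j < l)%N -> (l <= N t)%N ->
           (rask t l - rbid t j) / (dstrike B K t l - dstrike B K t j)
           >= (rbid t j - rask t i) / (dstrike B K t j - dstrike B K t i)),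
        (* (ii) *)
        (forall i l, (1 <= i)%N -> (i < l)%N -> (l <= N t)%N ->
           (rask t l - rbid t i) / (dstrike B K t l - dstrike B K t i) >= -1),
        (* (iii) *)
        (forall i j, (1 <= i)%N -> (i < j)%N -> (j <= N t)%N ->
           rbid t j <= rask t i) &
        (* (iv) *)
        (forall i j, (1 <= i)%N -> (i < j)%N -> (j <= N t)%N ->
           rbid t j = rask t i -> rbid t j = 0 /\ rask t i = 0)]).
Proof.
move=> _ B_gt0 B0 strikes quoted S0bid_gt0 S0bid_le.
have disc_gt0 t : (1 <= t <= T)%N -> 0 < disc B t.
  by case/andP=> _ tT; rewrite invr_gt0 B_gt0.
have k_gt0 t : (1 <= t <= T)%N -> forall i, (1 <= i <= N t)%N -> 0 < dstrike B K t i.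
  by move=> t_T i i_n; rewrite mulr_gt0 ?disc_gt0 //; apply: (strikes t t_T).1.
have k_lt t : (1 <= t <= T)%N -> forall i j, (1 <= i)%N -> (i < j)%N -> (j <= N t)%N ->
    dstrike B K t i < dstrike B K t j.
  by move=> t_T i j i1 ij jn; rewrite ltr_pM2l ?disc_gt0 //; apply: (strikes t t_T).2.
split.
- case=> Omega [p [_ [_ [_ [SC [[p_ge0 p_sum1] [_ [_ [_ [_ [_ [_ [calls _]]]]]]]]]]]]] t t_T.
  apply: (@quote_conditions_of_prices _ (call_price p (fun w => disc B t * SC t w))).
  + exact: call_price_nonincr.
  + exact: call_price_lipschitz.
  + exact: call_price_convex.
  + exact: call_price_eq0.
  + exact: k_lt.
  + by move=> i /(quoted t i t_T) [].
  + by move=> i; apply: calls.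
- move=> quotes.
  pose M := (\max_(s < T.+1) N s).+1.
  pose c t := price_curve (N t) (dstrike B K t) (rask t) (rbid t).
  apply: (@consistent_of_calibrated _ _ _ _ _ _ _ _ _ M
    (fun t => atom_weight (N t) (dstrike B K t) (c t))
    (fun t => atom (N t) (dstrike B K t) (c t))) => // t t_T.
  apply: calibrated_price_curve;
    [ | exact: k_gt0 | exact: k_lt | by move=> i; apply: quoted | exact: quotes].
  have tT : (t < T.+1)%N by rewrite ltnS; case/andP: t_T.
  by have := @leq_bigmax _ (fun s : 'I_T.+1 => N s) (inord t); rewrite inordK.
Qed.
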